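(* Let $\alpha>0$, $\eta=\alpha/(L+\alpha)$. Consider AggGCG (primal) with $y_0\in\mathrm{dom}\, h$, $s_0\in\mathbb{R}^n$: for $k\ge0$, $x_{k+1}=\mathrm{argmin}_x\{\langle s_k,x\rangle+h^\alpha(x)\}$, $y_{k+1}=(1-\eta)y_k+\eta x_{k+1}$, $s_{k+1}=(1-\eta)s_k+\eta\nabla f(y_k)$. Consider AggGCG (dual) with $z_0\in\mathrm{dom}\, f^*$, $v_0\in\mathbb{R}^n$: for $k\ge0$, $\bar z_{k+1}=\mathrm{argmin}_z\{-\langle v_k,z\rangle+f^*(z)\}$, $z_{k+1}=(1-\eta)z_k+\eta\bar z_{k+1}$, $v_{k+1}=(1-\eta)v_k+\eta\nabla(h^\alpha)^*(-z_k)$. If $s_0=z_0$ and $v_0=y_0$, then for every $k\ge0$: $y_k=v_k$, $s_k=z_k$, $x_{k+1}=\nabla(h^\alpha)^*(-z_k)$, and $\nabla f(y_k)=\bar z_{k+1}$.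
   Context: Let $\|\cdot\|$ be a norm on $\mathbb{R}^n$ with dual norm $\|\cdot\|_*$. Let $f:\mathbb{R}^n\to\mathbb{R}$ be convex, differentiable and $L$-smooth ($L>0$) with respect to $\|\cdot\|$, $h:\mathbb{R}^n\to(-\infty,\infty]$ closed proper convex with bounded domain, and $w:\mathbb{R}^n\to[0,+\infty]$ closed, $1$-strongly convex with respect to $\|\cdot\|$ on $\mathrm{dom}\, h$, with $\max_{\mathrm{dom}\, h}w<\infty$. Let $h^\alpha=h+\alpha w$; $^*$ denotes convex conjugate ($(h^\alpha)^*$ is differentiable, $f^*$ is $(1/L)$-strongly convex w.r.t. $\|\cdot\|_*$). *)

From HB Require Import structures.
From mathcomp Require Import all_boot all_order all_algebra.
From mathcomp Require Import all_classical all_reals all_analysis.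
Set Implicit Arguments. Unset Strict Implicit. Unset Printing Implicit Defensive.
Import Order.TTheory GRing.Theory Num.Theory.
Import numFieldNormedType.Exports.
Local Open Scope classical_set_scope.
Local Open Scope ring_scope.

Section Defs.
Context {R : realType} {n : nat}.
Notation vec := 'rV[R]_n.

Definition dot (x y : vec) : R := \sum_(i < n) x ord0 i * y ord0 i.

Definition is_norm (N : vec -> R) : Prop :=
  [/\ forall x, 0 <= N x,
      forall x, N x = 0 -> x = 0,
      forall (a : R) x, N (a *: x) = `|a| * N x
    & forall x y, N (x + y) <= N x + N y].

Definition dual_norm (N : vec -> R) (y : vec) : R :=
  sup [set dot y x | x in [set x | N x <= 1]].

Definition convex_fun (f : vec -> R) : Prop :=
  forall x y (t : R), 0 <= t <= 1 ->
    f (t *: x + (1 - t) *: y) <= t * f x + (1 - t) * f y.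

Definition is_gradient (f : vec -> R) (g : vec -> vec) : Prop :=
  forall x, differentiable f x /\ forall d, 'd f x d = dot (g x) d.

Definition L_smooth (N : vec -> R) (L : R) (g : vec -> vec) : Prop :=
  forall x y, dual_norm N (g x - g y) <= L * N (x - y).

Definition edom (h : vec -> \bar R) : set vec := [set x | (h x < +oo)%E].

Definition proper_fun (h : vec -> \bar R) : Prop :=
  (forall x, (-oo < h x)%E) /\ exists x, (h x < +oo)%E.

Definition econvex (h : vec -> \bar R) : Prop :=
  forall (x y : vec) (t : R), 0 <= t <= 1 ->
    (h (t *: x + (1 - t) *: y)%R <= t%:E * h x + (1 - t)%:E * h y)%E.

(* closed = lower semicontinuous = all sublevel sets closed *)
Definition eclosed (h : vec -> \bar R) : Prop :=
  forall a : R, closed [set x | (h x <= a%:E)%E].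

Definition bounded_dom (N : vec -> R) (h : vec -> \bar R) : Prop :=
  exists M : R, forall x, edom h x -> N x <= M.

Definition strongly_convex_on (N : vec -> R) (D : set vec) (w : vec -> \bar R) : Prop :=
  forall (x y : vec) (t : R), D x -> D y -> 0 <= t <= 1 ->
    (w (t *: x + (1 - t) *: y)%R + (t * (1 - t) / 2 * N (x - y)%R ^+ 2)%:E
       <= t%:E * w x + (1 - t)%:E * w y)%E.

Definition econj (h : vec -> \bar R) (y : vec) : \bar R :=
  ereal_sup [set ((dot y x)%:E - h x)%E | x in [set: vec]].

Definition is_argmin (F : vec -> \bar R) (x : vec) : Prop :=
  forall z, (F x <= F z)%E.

End Defs.

(* Both iterations are driven by one fact of conjugate duality: if X minimizes
   <s, .> + phi, then X attains the supremum defining phi^*(-s), so the affine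
   minorant q |-> <q, X> - phi(X) of phi^* touches it at -s and X is the
   gradient of phi^* there (phi^* is finite everywhere because dom phi is
   bounded).  Applied to phi = h^alpha this gives
   x_{k+1} = grad (h^alpha)^*(-s_k); applied to phi = f^* together with the
   Fenchel-Young equality f^*(grad f v) = <grad f v, v> - f v it gives
   zbar_{k+1} = grad f (v_k). *)
From HB Require Import structures.
From mathcomp Require Import all_boot all_order all_algebra.
From mathcomp Require Import all_classical all_reals all_analysis.
From mathcomp Require Import lra.
Import Order.TTheory GRing.Theory Num.Theory.
Import numFieldNormedType.Exports.
Local Open Scope classical_set_scope.
Local Open Scope ring_scope.

Section Duality.
Context {R : realType} {n : nat}.
Local Notation vec := 'rV[R]_n.
Implicit Types (a b c p q u : vec) (N : vec -> R).

Lemma dotC a b : dot a b = dot b a.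
Proof. by apply: eq_bigr => i _; rewrite mulrC. Qed.

Lemma dotDr a b c : dot a (b + c) = dot a b + dot a c.
Proof. by rewrite /dot -big_split; apply: eq_bigr => i _; rewrite mxE mulrDr. Qed.

Lemma dotZr a b k : dot a (k *: b) = k * dot a b.
Proof. by rewrite /dot mulr_sumr; apply: eq_bigr => i _; rewrite mxE mulrCA. Qed.

Lemma dotNr a b : dot a (- b) = - dot a b.
Proof. by rewrite -scaleN1r dotZr mulN1r. Qed.

Lemma dotBr a b c : dot a (b - c) = dot a b - dot a c.
Proof. by rewrite dotDr dotNr. Qed.

Lemma dotDl a b c : dot (b + c) a = dot b a + dot c a.
Proof. by rewrite dotC dotDr !(dotC a). Qed.

Lemma dotNl a b : dot (- b) a = - dot b a.
Proof. by rewrite dotC dotNr dotC. Qed.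

Lemma dot_delta a i : dot a 'e_i = a 0 i.
Proof.
rewrite /dot (bigD1 i) //= mxE eqxx mulr1 big1 ?addr0 // => j ji.
by rewrite mxE (negbTE ji) mulr0.
Qed.

Lemma entry_le_mx_norm a i : `|a 0 i| <= `|a|.
Proof.
by rewrite -[`|a|]/(mx_norm a) mx_normrE; apply/bigmax_geP; right; exists (ord0, i).
Qed.

Lemma dot_le_mx_norm a b : dot a b <= (\sum_(i < n) `|a 0 i|) * `|b|.
Proof.
rewrite /dot mulr_suml; apply: ler_sum => i _.
by apply: le_trans (ler_norm _) _; rewrite normrM ler_wpM2l ?entry_le_mx_norm.
Qed.

Section Norm.
Context {N : vec -> R} (normN : is_norm N).

Lemma is_norm0 : N 0 = 0.
Proof. by case: normN => _ _ NZ _; rewrite -(scale0r 0) NZ normr0 mul0r. Qed.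

Lemma is_norm_le_mx_norm : exists2 K, 0 < K & forall a, N a <= K * `|a|.
Proof.
have [N_ge0 _ NZ ND] := normN.
exists (1 + \sum_(i < n) N 'e_i); first by rewrite ltr_pwDl ?sumr_ge0.
move=> a; rewrite {1}(row_sum_delta a).
apply: (@le_trans _ _ (\sum_(i < n) `|a| * N 'e_i)).
  elim/big_ind2: _ => [|a1 b1 a2 b2 le1 le2|i _].
  - by rewrite is_norm0.
  - exact: le_trans (ND _ _) (lerD le1 le2).
  - by rewrite NZ ler_wpM2r ?entry_le_mx_norm.
by rewrite -mulr_sumr mulrC ler_wpM2r ?lerDr.
Qed.

Lemma is_norm_continuous : continuous N.
Proof.
have [K K0 NK] := is_norm_le_mx_norm; have [_ _ _ ND] := normN.
have N_lip a b : `|N a - N b| <= K * `|a - b|.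
  have NB c d : N c - N d <= K * `|c - d|.
    rewrite lerBlDr -{1}(subrK d c); apply: le_trans (ND _ _) _.
    by rewrite lerD2r NK.
  by rewrite ler_norml NB andbT lerNl opprB distrC NB.
move=> a; apply/(@cvgrPdist_le _ _ _ _ (nbhs_filter a)) => e e0.
have := (@cvgrPdist_le _ _ _ _ (nbhs_filter a) id a).1 cvg_id (e / K) (divr_gt0 e0 K0).
apply: filterS => b ab; apply: le_trans (N_lip a b) _.
by rewrite -ler_pdivlMl // mulrC.
Qed.

(* By compactness of the unit sphere of the max norm. *)
Lemma mx_norm_le_is_norm : exists2 c, 0 < c & forall a, c * `|a| <= N a.
Proof.
have [N_ge0 N_eq0 NZ _] := normN.
pose S := [set a : vec | `|a| = 1].
have normalize_in_S a : a != 0 -> S (`|a|^-1 *: a).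
  by move=> a0; rewrite /S /= normrZ normfV normr_id mulVf ?normr_eq0.
have [[a0 Sa0]|S0] := pselect (S !=set0); last first.
  exists 1 => // a; have [->|a0] := eqVneq a 0; first by rewrite normr0 mulr0.
  by exfalso; apply: S0; exists (`|a|^-1 *: a); apply: normalize_in_S.
have cS : compact S.
  apply: bounded_closed_compact.
    by exists 1; split => // M M1 b /= ->; rewrite ltW.
  rewrite -[S]/((fun a : vec => `|a|) @^-1` [set 1]).
  apply: preimage_closed; last exact: closed_eq.
  by move=> b _; exact: norm_continuous.
have [c Sc minc] := EVT_min_rV (ex_intro _ a0 Sa0) cS
  (continuous_subspaceT is_norm_continuous).
have c0 : c != 0.
  by apply: contra_eq_neq (set_mem Sc) => ->; rewrite normr0 eq_sym oner_neq0.
exists (N c); first by rewrite lt_def N_ge0 andbT; apply: contra_neq c0 => /N_eq0.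
move=> a; have [->|a0'] := eqVneq a 0; first by rewrite normr0 mulr0.
have := minc _ (mem_set (normalize_in_S a a0')).
rewrite NZ normfV normr_id -ler_pdivlMr ?normr_gt0 //.
by rewrite mulrC.
Qed.

Lemma dot_le_is_norm a : exists2 C, 0 <= C & forall b, dot a b <= C * N b.
Proof.
have [c c0 cN] := mx_norm_le_is_norm.
exists ((\sum_(i < n) `|a 0 i|) / c); first by rewrite divr_ge0 ?sumr_ge0 ?ltW.
move=> b; apply: le_trans (dot_le_mx_norm a b) _.
by rewrite -mulrA ler_wpM2l ?sumr_ge0 // ler_pdivlMl.
Qed.

End Norm.

Section Gradient.
Context {g : vec -> R} {G : vec -> vec} (gradG : is_gradient g G).

Lemma gradient_eq_subgradient p c :
  (forall q, g p + dot c (q - p) <= g q) -> G p = c.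
Proof.
move=> sub; apply/rowP => i.
pose e : vec := 'e_i; pose l t := g (t *: e + p).
have l_der t : derivable l t 1.
  by apply/diff_derivable/differentiable_comp => //; exact: (gradG _).1.
have Dl : 'D_1 l 0 = dot (G p) e.
  rewrite -(gradG p).2 -deriveE; last exact: (gradG p).1.
  rewrite /derive /l scale0r add0r.
  suff -> : (fun t : R => t^-1 *: (g ((t%:A + 0) *: e + p) - g p))
          = (fun t : R => t^-1 *: (g (t *: e + p) - g p)) by [].
  by apply/funext => t; rewrite addr0 [_%:A]mulr1.
(* By the subgradient inequality, t |-> l t - c_i t is minimal at 0. *)
have Dl_sub : is_derive (0 : R) 1 (l - (c 0 i) *: id) (dot (G p) e - c 0 i *: 1).
  by apply: is_deriveB; rewrite -Dl; apply: derivableP.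
have Dl_sub0 : is_derive (0 : R) 1 (l - (c 0 i) *: id) 0.
  apply: (@derive1_at_min _ _ (-1) 1) => [|t _||t _].
  - by rewrite (le_trans (lerN10 _)).
  - by apply: derivableB => //; apply/derivableZ/derivable_id.
  - by rewrite in_itv /= ltrN10 ltr01.
  - change (l 0 - c 0 i * 0 <= l t - c 0 i * t).
    rewrite /l scale0r add0r mulr0 subr0.
    by have := sub (t *: e + p); rewrite addrK dotZr dot_delta lerBrDr mulrC.
move: (@derive_val _ _ _ _ _ _ _ Dl_sub).
rewrite (@derive_val _ _ _ _ _ _ _ Dl_sub0) dot_delta.
by rewrite [_ *: 1]mulr1 => /eqP; rewrite eq_sym subr_eq0 => /eqP.
Qed.

Lemma convex_gradient_le : convex_fun g -> forall u p, g p + dot (G p) (u - p) <= g u.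
Proof.
move=> gconv u p; rewrite addrC -lerBrDr -(gradG p).2 -deriveE; last exact: (gradG p).1.
have gder : derivable g p (u - p) by apply: diff_derivable; exact: (gradG p).1.
rewrite /derive (cvg_at_rightE (fun t : R => t^-1 *: ((g \o shift p) (t *: (u - p)) - g p))) //.
apply: limr_le.
  rewrite -(cvg_at_rightE (fun t : R => t^-1 *: ((g \o shift p) (t *: (u - p)) - g p))) //.
  apply: cvg_trans gder; apply: cvg_app => A [e e0 Ae].
  by exists e => // t te t0; apply: Ae => //; exact/lt0r_neq0.
near=> t.
have t0 : 0 < t by near: t; exists 1 => //= ? _ ->.
have t1 : t <= 1.
  near: t; exists 1 => //= t; rewrite /ball /= sub0r normrN => tl _.
  by rewrite ltW // (le_lt_trans (ler_norm _) tl).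
rewrite /= -[_ *: _]/(t^-1 * _) ler_pdivrMl //.
have -> : t *: (u - p) + p = t *: u + (1 - t) *: p.
  by rewrite scalerBr scalerBl scale1r addrAC addrA.
have := gconv u p t; rewrite t1 ltW //= => /(_ isT); lra.
Unshelve. all: by end_near.
Qed.

End Gradient.

Lemma econj_ge (phi : vec -> \bar R) q u : ((dot q u)%:E - phi u <= econj phi q)%E.
Proof. by apply: ereal_sup_ubound; exists u. Qed.

Lemma econj_le (phi : vec -> \bar R) q B : (forall u, (-oo < phi u)%E) ->
  (forall u t, phi u = t%:E -> dot q u - t <= B) -> (econj phi q <= B%:E)%E.
Proof.
move=> phi_gtNy ub; apply/ereal_supP => _ [u _ <-].
case E: (phi u) (phi_gtNy u) => [t| |] //= _; last by rewrite leNye.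
by rewrite -EFinB lee_fin; exact: ub.
Qed.

Lemma argmin_conj_gradient {N} {phi : vec -> \bar R} {G : vec -> vec} {s X} :
  is_norm N -> (forall u, (-oo < phi u)%E) -> (exists u0, (phi u0 < +oo)%E) ->
  bounded_dom N phi -> is_gradient (fun u => fine (econj phi u)) G ->
  is_argmin (fun u => ((dot s u)%:E + phi u)%E) X -> G (- s) = X.
Proof.
move=> normN phi_gtNy [u0 phi_u0] [M domM] gradG Xmin.
have [r phiX] : exists r, phi X = r%:E.
  case E: (phi X) (phi_gtNy X) => [r| |] // _; first by exists r.
  have := Xmin u0; rewrite /= E addey //.
  by move=> /(lt_le_trans (lte_add_pinfty (ltry (dot s u0)) phi_u0)); rewrite ltxx.
have Xmin_fin u t : phi u = t%:E -> dot s X + r <= dot s u + t.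
  by move=> E; have := Xmin u; rewrite /= phiX E -!EFinD lee_fin.
have conj_ge q : ((dot q X - r)%:E <= econj phi q)%E.
  by rewrite EFinB -phiX econj_ge.
have conj_s : econj phi (- s) = (dot (- s) X - r)%:E.
  apply/le_anti; rewrite conj_ge andbT; apply: econj_le => // u t /Xmin_fin.
  by rewrite !dotNl; lra.
(* fine sends +oo to 0, so finiteness of phi^* is needed for the minorant. *)
have conj_fin q : exists B, (econj phi q <= B%:E)%E.
  have [C C0 dot_le] := dot_le_is_norm normN (q + s).
  exists (C * M - dot s X - r); apply: econj_le => // u t E.
  have Nu : N u <= M by apply: domM; rewrite /edom /= E ltry.
  have CNu : C * N u <= C * M by rewrite ler_wpM2l.
  have := dot_le u; have := Xmin_fin u t E; rewrite dotDl; lra.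
apply: (gradient_eq_subgradient gradG) => q; rewrite conj_s /=.
have [B conj_le] := conj_fin q; move: (conj_ge q) conj_le.
case: (econj phi q) => [t| |] //=; rewrite !lee_fin => le_t _.
by rewrite dotBr dotNr !dotNl opprK !(dotC X); lra.
Qed.

Lemma argmin_regularized_conj_gradient {N} {h w : vec -> \bar R} {al G s X} :
  is_norm N -> proper_fun h -> bounded_dom N h -> (forall u, (0 <= w u)%E) ->
  (exists2 u0, edom h u0 & (w u0 < +oo)%E) -> 0 < al ->
  let ha u := (h u + al%:E * w u)%E in
  is_gradient (fun u => fine (econj ha u)) G ->
  is_argmin (fun u => ((dot s u)%:E + ha u)%E) X -> G (- s) = X.
Proof.
move=> normN [h_gtNy _] [M domM] w_ge0 [u0 hu0 wu0] al0 ha gradG Xmin.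
have h_le_ha u : (h u <= ha u)%E.
  by apply: leeDl; apply: mule_ge0 (w_ge0 u); rewrite lee_fin ltW.
apply: (argmin_conj_gradient normN _ _ _ gradG Xmin).
- by move=> u; apply: lt_le_trans (h_le_ha u).
- exists u0; apply: lte_add_pinfty hu0 _.
  by case: (w u0) wu0 (w_ge0 u0) => [t| |] //= _ _; rewrite -EFinM ltry.
- by exists M => u /(le_lt_trans (h_le_ha u)) /domM.
Qed.

Lemma argmin_dual_gradient {f : vec -> R} {gf v zb} :
  convex_fun f -> is_gradient f gf ->
  is_argmin (fun u => ((- dot v u)%:E + econj (fun u => (f u)%:E) u)%E) zb ->
  gf v = zb.
Proof.
move=> fconv gradf zbmin; apply: (gradient_eq_subgradient gradf) => q.
have fenchel_young : (econj (fun u => (f u)%:E) (gf v) <= (dot (gf v) v - f v)%:E)%E.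
  apply: econj_le => [u|u t [<-]]; first exact: ltNyr.
  by have := convex_gradient_le gradf fconv u v; rewrite dotBr; lra.
have := le_trans (leeD (lexx _) (econj_ge _ zb q))
          (le_trans (zbmin (gf v)) (leeD (lexx _) fenchel_young)).
by rewrite -!EFinD lee_fin dotBr (dotC v (gf v)) (dotC v zb); lra.
Qed.

End Duality.

Theorem proposition4p1 (R : realType) (n : nat)
  (N : 'rV[R]_n -> R) (f : 'rV[R]_n -> R) (gradf : 'rV[R]_n -> 'rV[R]_n) (L : R)
  (h w : 'rV[R]_n -> \bar R) (alpha : R)
  (G : 'rV[R]_n -> 'rV[R]_n)
  (x y s zbar z v : nat -> 'rV[R]_n) :
  is_norm N ->
  convex_fun f -> is_gradient f gradf -> 0 < L -> L_smooth N L gradf ->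
  eclosed h -> proper_fun h -> econvex h -> bounded_dom N h ->
  (forall u, (0 <= w u)%E) -> eclosed w -> strongly_convex_on N (edom h) w ->
  (exists2 u0, edom h u0 & (w u0 < +oo)%E /\ forall u, edom h u -> (w u <= w u0)%E) ->
  0 < alpha ->
  let ha := fun u => (h u + alpha%:E * w u)%E in
  let eta := alpha / (L + alpha) in
  (* G is the gradient of the (real-valued) conjugate (h^alpha)^* *)
  is_gradient (fun u => fine (econj ha u)) G ->
  (* AggGCG (primal) *)
  edom h (y 0%N) ->
  (forall k, is_argmin (fun u => ((dot (s k) u)%:E + ha u)%E) (x k.+1)) ->
  (forall k, y k.+1 = (1 - eta) *: y k + eta *: x k.+1) ->
  (forall k, s k.+1 = (1 - eta) *: s k + eta *: gradf (y k)) ->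
  (* AggGCG (dual) *)
  edom (econj (fun u => (f u)%:E)) (z 0%N) ->
  (forall k, is_argmin (fun u => ((- dot (v k) u)%:E + econj (fun u => (f u)%:E) u)%E)
                       (zbar k.+1)) ->
  (forall k, z k.+1 = (1 - eta) *: z k + eta *: zbar k.+1) ->
  (forall k, v k.+1 = (1 - eta) *: v k + eta *: G (- z k)) ->
  s 0%N = z 0%N -> v 0%N = y 0%N ->
  forall k, [/\ y k = v k, s k = z k, x k.+1 = G (- z k) & gradf (y k) = zbar k.+1].
Proof.
move=> normN fconv f_grad _ _ _ hprop _ hbd w_ge0 _ _ [u0 hu0 [wu0 _]] alpha0 ha eta
  G_grad _ xmin yS sS _ zbmin zS vS s0 v0.
have xE k : x k.+1 = G (- s k).
  by apply/esym/(argmin_regularized_conj_gradient normN hprop hbd w_ge0 _ alpha0 G_grad);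
    [exists u0 | exact: xmin].
have zbE k : zbar k.+1 = gradf (v k) by rewrite (argmin_dual_gradient fconv f_grad (zbmin k)).
have yv_sz k : y k = v k /\ s k = z k.
  elim: k => [|k [yv sz]] //.
  by rewrite yS vS sS zS xE zbE yv sz.
move=> k; have [yv sz] := yv_sz k.
by split => //; [rewrite xE sz | rewrite zbE yv].
Qed.
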